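(* Let $\alpha\in\{0,1,2\}^*$ and let $c_\infty[\alpha]$ be the CQCA limit configuration on input $\alpha$. Let $e=(x_0,y_0)$ be a cell such that $e+N$ and $e+W$ are both defined in $c_\infty[\alpha]$, and let $s\in\{0,1\}$ be the sum bit of $e+W$. Let $\gamma$ be the base-$3'$ word given by the (defined) cells $(x_0,y)$, $y_0<y\le|\alpha|$. Then $s\equiv[\![\gamma]\!]_{3'}\pmod 2$; that is, $s=0$ iff $[\![\gamma]\!]_{3'}$ is even.
   Context: Notation: $E=(1,0)$, $W=(-1,0)$, $N=(0,1)$, $S=(0,-1)$ in $\mathbb{Z}^2$; $[P]\in\{0,1\}$ equals $1$ iff $P$ holds. Strings are indexed from the right. Base $3'$: words over $\{0,\bar0,1,\bar1\}$ with trit values $0\mapsto0$, $\bar0\mapsto1$, $1\mapsto1$, $\bar1\mapsto2$, and $[\![\gamma]\!]_{3'}=\sum_i\mathrm{val}(\gamma_i)3^i$. The symbols $0,\bar0,1,\bar1$ are identified with the cell states $(0,0),(0,1),(1,0),(1,1)$. The encoding $\mathrm{enc}:\{0,1,2\}^*\to\{0,\bar0,1,\bar1\}^*$ acts symbol by symbol: $0\mapsto0$, $2\mapsto\bar1$, and a digit $\alpha_i=1$ maps to $1$ if there exists $j<i$ with $\alpha_j\ne1$ and the largest such $j$ has $\alpha_j=2$, and to $\bar0$ otherwise. A vertical contiguous segment of defined cells gives the base-$3'$ word formed by the cells' states read from north (most significant) to south (least significant). The CQCA. State set $\Sigma=\{0,1,\bot\}^2\setminus\{(\bot,0),(\bot,1)\}$;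 a state $(s,c)$ has sum bit $s$ and carry bit $c$; it is undefined if $(\bot,\bot)$, half-defined if $s\in\{0,1\},c=\bot$, defined if $s,c\in\{0,1\}$. One step $F(C)$ of a configuration $C:\mathbb{Z}^2\to\Sigma$: first the non-local rule gives $C'$: $C'(u)=(0,1)$ if $C(u+W)=(1,\bot)$, $C(u)\in\{(0,\bot),(\bot,\bot)\}$ and $C(u+iE)\in\{(0,\bot),(\bot,\bot)\}$ for all $i\ge1$; otherwise $C'(u)=C(u)$. Then the local rule on $C'$ at all cells simultaneously: (i) if $C'(u)=(s,\bot)$ half-defined and $C'(u+E)=(s',c')$ defined, $F(C)(u)=(s,[s+s'+c'\ge2])$; (ii) if $C'(u)=(\bot,\bot)$, $C'(u+N)=(s,\bot)$ half-defined and $C'(u+N+E)=(s',c')$ defined, $F(C)(u)=((s+s'+c')\bmod2,\bot)$; (iii) otherwise $F(C)(u)=C'(u)$. For $\alpha\in\{0,1,2\}^*$ with $\gamma=\mathrm{enc}(\alpha)$, the initial configuration $c_0[\alpha]$ is: $c_0[\alpha](0,i)=\gamma_{i-1}$ for $1\le i\le|\alpha|$, $c_0[\alpha](x,|\alpha|)=(0,\bot)$ for all $x<0$, and $(\bot,\bot)$ elsewhere. Each cell's state in $F^i(c_0[\alpha])$ is eventually constant; $c_\infty[\alpha]$ is the pointwise limit. *)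

From Stdlib Require Import ZArith List Bool Arith Classical ClassicalEpsilon.
Import ListNotations.
Open Scope Z_scope.

(* Cell states: Sigma = {0,1,bot}^2 \ {(bot,0),(bot,1)}. *)
Inductive state : Type :=
| Und : state                      (* (bot, bot)            *)
| Half : bool -> state             (* (s, bot), half-defined *)
| Def : bool -> bool -> state.     (* (s, c), defined        *)

Definition cell := (Z * Z)%type.
Definition config := cell -> state.

Definition dirE : cell := (1, 0).
Definition dirW : cell := (-1, 0).
Definition dirN : cell := (0, 1).
Definition dirS : cell := (0, -1).
Definition cadd (u v : cell) : cell := (fst u + fst v, snd u + snd v).

Definition is_defined (st : state) : Prop :=
  match st with Def _ _ => True | _ => False end.

Definition zero_or_und (st : state) : Prop :=
  st = Half false \/ st = Und.

Definition b2n (b : bool) : nat := if b then 1%nat else 0%nat.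

Definition nonlocal_cond (C : config) (u : cell) : Prop :=
  C (cadd u dirW) = Half true /\ zero_or_und (C u) /\
  (forall i : Z, 1 <= i -> zero_or_und (C (cadd u (i * fst dirE, i * snd dirE)))).

Definition nonlocal (C : config) : config := fun u =>
  if excluded_middle_informative (nonlocal_cond C u) then Def false true else C u.

Definition local (C' : config) : config := fun u =>
  match C' u, C' (cadd u dirE) with
  | Half s, Def s' c' => Def s (Nat.leb 2 (b2n s + b2n s' + b2n c'))
  | Und, _ =>
      match C' (cadd u dirN), C' (cadd (cadd u dirN) dirE) with
      | Half s, Def s' c' => Half (Nat.odd (b2n s + b2n s' + b2n c'))
      | _, _ => Und
      end
  | st, _ => st
  end.

Definition F (C : config) : config := local (nonlocal C).

Definition Fiter (n : nat) (C : config) : config := Nat.iter n F C.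

Inductive trit : Type := T0 | T1 | T2.

(* A string alpha is written in reading order (leftmost = most significant);
   strings are indexed from the right: alpha_i is the i-th symbol from the right. *)
Definition ridx {A} (d : A) (l : list A) (i : nat) : A :=
  nth (length l - 1 - i)%nat l d.

(* encoding enc : {0,1,2}^* -> {0,0bar,1,1bar}^*, symbol i (from the right) *)
Definition enc_sym (alpha : list trit) (i : nat) : state :=
  match ridx T0 alpha i with
  | T0 => Def false false                          (* 0    *)
  | T2 => Def true true                            (* 1bar *)
  | T1 =>
      if excluded_middle_informative
           (exists j, (j < i)%nat /\ ridx T0 alpha j <> T1 /\
                      (forall k, (j < k < i)%nat -> ridx T0 alpha k = T1) /\
                      ridx T0 alpha j = T2)
      then Def true false                          (* 1    *)
      else Def false true                          (* 0bar *)
  end.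

Definition c0 (alpha : list trit) : config := fun u =>
  let n := Z.of_nat (length alpha) in
  if (fst u =? 0) && (1 <=? snd u) && (snd u <=? n)
  then enc_sym alpha (Z.to_nat (snd u - 1))
  else if (fst u <? 0) && (snd u =? n) then Half false
  else Und.

Definition is_limit (alpha : list trit) (cinf : config) : Prop :=
  forall u : cell, exists n0 : nat, forall n : nat, (n0 <= n)%nat ->
    Fiter n (c0 alpha) u = cinf u.

(* trit value of a base-3' symbol: 0->0, 0bar->1, 1->1, 1bar->2 *)
Definition sval (st : state) : nat :=
  match st with Def s c => (b2n s + b2n c)%nat | _ => 0%nat end.

(* value of a base-3' word gamma given as a list, least significant first *)
Fixpoint val3' (gamma : list state) : nat :=
  match gamma with
  | [] => 0%nat
  | g :: gs => (sval g + 3 * val3' gs)%nat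
  end.

(* the word formed by the cells (x0, y), y0 < y <= top, read north (most
   significant) to south (least significant); returned least significant first *)
Definition column_word (C : config) (x0 y0 top : Z) : list state :=
  map (fun k : nat => C (x0, y0 + 1 + Z.of_nat k))
      (seq 0 (Z.to_nat (top - y0))).

(* We isolate an invariant [Inv n C] of configurations (n = |alpha|)
   that holds for c_0[alpha] and is preserved by one step F.  Besides
   structural facts (where undefined, half-defined and defined cells can
   occur, and that definedness propagates northwards inside a column), it
   contains the arithmetic heart of the theorem: every cell (x,y), x < 0,
   carrying a sum bit s satisfies
       s = [[ word of column x+1 strictly above row y ]]_3'   (mod 2).
   The local rule creates a half-defined cell (x,y) with sum bit
   s1 + s' + c', where (s1,bot) sits at (x,y+1) and (s',c') at (x+1,y+1);
   as s' + c' is the trit value of (x+1,y+1) and 3 is odd, the parity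
   relation is inherited from (x,y+1). *)

From Stdlib Require Import ZArith List Arith Lia ZifyNat ClassicalEpsilon.
Open Scope Z_scope.

Lemma cadd_E x y : cadd (x,y) dirE = (x+1,y).
Proof. unfold cadd, dirE; simpl; f_equal; lia. Qed.

Lemma cadd_W x y : cadd (x,y) dirW = (x-1,y).
Proof. unfold cadd, dirW; simpl; f_equal; lia. Qed.

Lemma cadd_N x y : cadd (x,y) dirN = (x,y+1).
Proof. unfold cadd, dirN; simpl; f_equal; lia. Qed.

Definition sum_bit (st : state) : option bool :=
  match st with Und => None | Half s => Some s | Def s _ => Some s end.

Lemma und_dec st : {st = Und} + {st <> Und}.
Proof. destruct st; [left; reflexivity | right; discriminate | right; discriminate]. Qed.

Lemma defined_not_und st : is_defined st -> st <> Und.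
Proof. destruct st; simpl; try contradiction; discriminate. Qed.

Lemma not_und_sum_bit st : st <> Und -> exists s, sum_bit st = Some s.
Proof. destruct st; simpl; eauto. intros H; exfalso; apply H; reflexivity. Qed.

Lemma sum_bit_not_und st s : sum_bit st = Some s -> st <> Und.
Proof. destruct st; simpl; discriminate. Qed.

Definition local_rule (a b c d : state) : state :=
  match a, b with
  | Half s, Def s' c' => Def s (Nat.leb 2 (b2n s + b2n s' + b2n c'))
  | Und, _ =>
      match c, d with
      | Half s, Def s' c' => Half (Nat.odd (b2n s + b2n s' + b2n c'))
      | _, _ => Und
      end
  | st, _ => st
  end.

Lemma F_at C x y : F C (x,y) =
  local_rule (nonlocal C (x,y)) (nonlocal C (x+1,y))
             (nonlocal C (x,y+1)) (nonlocal C (x+1,y+1)).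
Proof.
  unfold F, local, local_rule. rewrite !cadd_N, !cadd_E.
  destruct (nonlocal C (x,y)); reflexivity.
Qed.

Lemma local_rule_sum_bit a b c d s :
  sum_bit a = Some s -> sum_bit (local_rule a b c d) = Some s.
Proof. destruct a, b; simpl; intros H; try discriminate; auto. Qed.

Lemma local_rule_und b c d : local_rule Und b c d <> Und ->
  exists s1 s' c', c = Half s1 /\ d = Def s' c' /\
    local_rule Und b c d = Half (Nat.odd (b2n s1 + b2n s' + b2n c')).
Proof. destruct c, d; simpl; intros H; try (exfalso; apply H; reflexivity); eauto 6. Qed.

Lemma local_rule_half_defined s b c d :
  is_defined (local_rule (Half s) b c d) <-> is_defined b.
Proof. destruct b; simpl; tauto. Qed.

Lemma local_rule_fills a b c d s :
  c = Half s -> is_defined d -> local_rule a b c d <> Und.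
Proof.
  intros -> Hd. destruct d; simpl in Hd; try contradiction.
  destruct a; simpl; try discriminate. destruct b; discriminate.
Qed.

Lemma nonlocal_cases C x y : nonlocal C (x,y) = C (x,y) \/
  (nonlocal C (x,y) = Def false true /\ C (x-1,y) = Half true /\
   (C (x,y) = Half false \/ C (x,y) = Und)).
Proof.
  unfold nonlocal. destruct (excluded_middle_informative _) as [H|H];
    [right | left; reflexivity].
  destruct H as [H1 [H2 _]]. rewrite cadd_W in H1. unfold zero_or_und in H2. auto.
Qed.

Lemma nonlocal_half C u s : nonlocal C u = Half s -> C u = Half s.
Proof. unfold nonlocal. destruct (excluded_middle_informative _); auto; discriminate. Qed.

Lemma nonlocal_def_inv C x y s c : nonlocal C (x,y) = Def s c ->
  C (x,y) = Def s c \/ (s = false /\ c = true /\ C (x-1,y) = Half true).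
Proof.
  intros H. destruct (nonlocal_cases C x y) as [E|[E [W _]]].
  - left; congruence.
  - right. rewrite E in H. inversion H; auto.
Qed.

Lemma nonlocal_of_def C u s c : C u = Def s c -> nonlocal C u = Def s c.
Proof.
  unfold nonlocal. destruct (excluded_middle_informative _) as [[_ [Z _]]|]; auto.
  intros H; rewrite H in Z; destruct Z; discriminate.
Qed.

Lemma nonlocal_sum_bit C u s : sum_bit (C u) = Some s -> sum_bit (nonlocal C u) = Some s.
Proof.
  unfold nonlocal. destruct (excluded_middle_informative _) as [[_ [Z _]]|]; auto.
  destruct Z as [Z|Z]; rewrite Z; simpl; congruence.
Qed.

Lemma F_keeps_def C x y s c : C (x,y) = Def s c -> F C (x,y) = Def s c.
Proof. intros H. rewrite F_at, (nonlocal_of_def _ _ _ _ H). reflexivity. Qed.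

Lemma F_keeps_defined C x y : is_defined (C (x,y)) -> is_defined (F C (x,y)).
Proof.
  intros H. destruct (C (x,y)) eqn:E; simpl in H; try contradiction.
  rewrite (F_keeps_def _ _ _ _ _ E); exact I.
Qed.

Lemma F_of_nonlocal_def C x y s c : nonlocal C (x,y) = Def s c -> F C (x,y) = Def s c.
Proof. intros H. rewrite F_at, H. reflexivity. Qed.

Lemma F_keeps_sum_bit C x y s : sum_bit (C (x,y)) = Some s -> sum_bit (F C (x,y)) = Some s.
Proof. intros H. rewrite F_at. apply local_rule_sum_bit, nonlocal_sum_bit, H. Qed.

Lemma F_keeps_not_und C x y : C (x,y) <> Und -> F C (x,y) <> Und.
Proof.
  intros H. destruct (not_und_sum_bit _ H) as [s Hs].
  apply (sum_bit_not_und _ s), F_keeps_sum_bit, Hs.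
Qed.

Lemma F_und_inv C x y : F C (x,y) = Und -> C (x,y) = Und.
Proof.
  intros H. destruct (C (x,y)) eqn:E; auto; exfalso; apply (F_keeps_not_und C x y); auto;
    rewrite E; discriminate.
Qed.

Lemma F_new_cell C x y : C (x,y) = Und -> F C (x,y) <> Und ->
  (F C (x,y) = Def false true /\ C (x-1,y) = Half true) \/
  (exists s1 s' c', C (x,y+1) = Half s1 /\ nonlocal C (x+1,y+1) = Def s' c' /\
     F C (x,y) = Half (Nat.odd (b2n s1 + b2n s' + b2n c'))).
Proof.
  intros HU HF. rewrite F_at in *.
  destruct (nonlocal_cases C x y) as [E|[E [W _]]]; rewrite E in *.
  - rewrite HU in *. right. destruct (local_rule_und _ _ _ HF) as (s1&s'&c'&Hc&Hd&He).
    exists s1, s', c'. split; [apply nonlocal_half; auto|]. split; auto.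
  - left. auto.
Qed.

Lemma F_half_to_defined C x y s : C (x,y) = Half s -> is_defined (F C (x,y)) ->
  (nonlocal C (x,y) = Half s /\ is_defined (nonlocal C (x+1,y))) \/
  (s = false /\ F C (x,y) = Def false true /\ C (x-1,y) = Half true).
Proof.
  intros H HD. destruct (nonlocal_cases C x y) as [E|[E [W Z]]].
  - left. rewrite H in E. split; auto.
    rewrite F_at, E in HD. eapply local_rule_half_defined; eauto.
  - right. rewrite H in Z. destruct Z as [Z|Z]; inversion Z; subst.
    split; auto. split; auto. apply F_of_nonlocal_def; auto.
Qed.

Lemma F_fills_below C x y s : nonlocal C (x,y+1) = Half s ->
  is_defined (nonlocal C (x+1,y+1)) -> F C (x,y) <> Und.
Proof. intros H1 H2. rewrite F_at. eapply local_rule_fills; eauto. Qed.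

Lemma F_half_with_defined_east C x y s : C (x,y) = Half s ->
  is_defined (C (x+1,y)) -> is_defined (F C (x,y)).
Proof.
  intros H HE. destruct (nonlocal_cases C x y) as [E|[E [W Z]]].
  - rewrite F_at, E, H. apply local_rule_half_defined.
    destruct (C (x+1,y)) eqn:E2; simpl in HE; try contradiction.
    rewrite (nonlocal_of_def _ _ _ _ E2). exact I.
  - rewrite (F_of_nonlocal_def _ _ _ _ _ E). exact I.
Qed.

Lemma column_word_cons C x y n : y < n ->
  column_word C x y n = C (x,y+1) :: column_word C x (y+1) n.
Proof.
  intros H. unfold column_word.
  replace (Z.to_nat (n - y)) with (S (Z.to_nat (n - (y+1)))) by lia.
  cbn [seq map]. rewrite <- seq_shift, map_map. f_equal.
  - f_equal. f_equal. lia.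
  - apply map_ext. intros k. f_equal. f_equal. rewrite Nat2Z.inj_succ. lia.
Qed.

Lemma column_word_ext C D x y n : (forall y', y < y' <= n -> C (x,y') = D (x,y')) ->
  column_word C x y n = column_word D x y n.
Proof.
  intros H. unfold column_word. apply map_ext_in. intros k Hk.
  apply in_seq in Hk. apply H. lia.
Qed.

Lemma column_defined_upto (C : config) (n x y : Z) :
  (forall x y, y < n -> is_defined (C (x,y)) -> is_defined (C (x,y+1))) ->
  is_defined (C (x,y)) -> forall y', y <= y' <= n -> is_defined (C (x,y')).
Proof.
  intros Hup Hd y' Hy. replace y' with (y + Z.of_nat (Z.to_nat (y'-y))) by lia.
  assert (Hk : y + Z.of_nat (Z.to_nat (y'-y)) <= n) by lia. revert Hk.
  generalize (Z.to_nat (y'-y)). intros k; induction k as [|k IH]; intros Hk.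
  - rewrite Z.add_0_r. exact Hd.
  - rewrite Nat2Z.inj_succ. replace (y + Z.succ (Z.of_nat k)) with (y + Z.of_nat k + 1) by lia.
    apply Hup; [lia|]. apply IH. lia.
Qed.

Lemma b2n_odd k : b2n (Nat.odd k) = (k mod 2)%nat.
Proof.
  destruct (Nat.odd k) eqn:E; simpl b2n.
  - apply Nat.odd_spec in E. destruct E as [m ->]. lia.
  - assert (E2 : Nat.even k = true) by (rewrite <- Nat.negb_odd, E; reflexivity).
    apply Nat.even_spec in E2. destruct E2 as [m ->]. lia.
Qed.

(* The arithmetic step: the bit s1 + s' + c' written below (s1,bot) has the
   parity of the column word extended by the trit of (s',c'), as 3 is odd. *)
Lemma parity_new_half (s1 s' c' : bool) (w : list state) :
  (b2n s1 mod 2 = val3' w mod 2 ->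
   b2n (Nat.odd (b2n s1 + b2n s' + b2n c')) mod 2 = val3' (Def s' c' :: w) mod 2)%nat.
Proof. intros H. rewrite b2n_odd. cbn [val3' sval]. lia. Qed.

Record Inv (n : Z) (C : config) : Prop := {
  inv_support : forall x y, (1 <= x \/ n < y) -> C (x,y) = Und;
  inv_half_west : forall x y s, C (x,y) = Half s -> x < 0;
  inv_northeast : forall x y, x < 0 -> y < n -> C (x,y) <> Und ->
    is_defined (C (x+1,y+1));
  inv_up_not_und : forall x y, y < n -> C (x,y) <> Und -> C (x,y+1) <> Und;
  inv_up_defined : forall x y, y < n -> is_defined (C (x,y)) -> is_defined (C (x,y+1));
  (* a defined cell above an undefined one was created by the non-local rule *)
  inv_created : forall x y, x < 0 -> is_defined (C (x,y+1)) -> C (x,y) = Und ->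
    C (x,y+1) = Def false true /\ sum_bit (C (x-1,y+1)) = Some true;
  inv_carry_column : forall x y, C (x,y) = Half true -> C (x+1,y) = Und -> x = -1;
  inv_parity : forall x y s, x < 0 -> sum_bit (C (x,y)) = Some s ->
    (b2n s mod 2 = val3' (column_word C (x+1) y n) mod 2)%nat
}.

Lemma enc_sym_defined alpha i : is_defined (enc_sym alpha i).
Proof.
  unfold enc_sym. destruct (ridx T0 alpha i); simpl; auto.
  destruct (excluded_middle_informative _); simpl; auto.
Qed.

Lemma c0_cases alpha x y :
  (x = 0 /\ 1 <= y <= Z.of_nat (length alpha) /\ is_defined (c0 alpha (x,y))) \/
  (x < 0 /\ y = Z.of_nat (length alpha) /\ c0 alpha (x,y) = Half false) \/
  (c0 alpha (x,y) = Und /\ ~(x = 0 /\ 1 <= y <= Z.of_nat (length alpha)) /\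
     ~(x < 0 /\ y = Z.of_nat (length alpha))).
Proof.
  unfold c0. cbv zeta. simpl fst; simpl snd.
  destruct (Z.eqb_spec x 0), (Z.leb_spec 1 y), (Z.leb_spec y (Z.of_nat (length alpha))),
    (Z.ltb_spec x 0), (Z.eqb_spec y (Z.of_nat (length alpha))); simpl;
  first [ left; split; [lia|split;[lia|apply enc_sym_defined]]
        | right; left; repeat split; lia
        | right; right; split; [reflexivity | split; intros [? ?]; lia] ].
Qed.

Lemma Inv_c0 alpha : Inv (Z.of_nat (length alpha)) (c0 alpha).
Proof.
  set (n := Z.of_nat (length alpha)).
  constructor.
  - intros x y Hxy.
    destruct (c0_cases alpha x y) as [(?&?&?)|[(?&?&?)|(?&?&?)]]; [lia|lia|assumption].
  - intros x y s H. destruct (c0_cases alpha x y) as [(?&?&D)|[(?&?&?)|(U&?&?)]].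
    + rewrite H in D; simpl in D; contradiction.
    + assumption.
    + rewrite H in U; discriminate.
  - intros x y Hx Hy HU.
    destruct (c0_cases alpha x y) as [(?&?&?)|[(?&?&?)|(U&?&?)]]; [lia|lia|contradiction].
  - intros x y Hy HU.
    destruct (c0_cases alpha x y) as [(?&?&?)|[(?&?&?)|(U&?&?)]]; [|lia|contradiction].
    destruct (c0_cases alpha x (y+1)) as [(?&?&D2)|[(?&?&?)|(?&N1&?)]].
    + apply defined_not_und; auto.
    + lia.
    + exfalso; apply N1; split; lia.
  - intros x y Hy HD. destruct (c0_cases alpha x y) as [(?&?&?)|[(?&?&E)|(U&?&?)]].
    + destruct (c0_cases alpha x (y+1)) as [(?&?&?)|[(?&?&?)|(?&N1&?)]]; auto.
      * lia.
      * exfalso; apply N1; split; lia.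
    + rewrite E in HD; simpl in HD; contradiction.
    + rewrite U in HD; simpl in HD; contradiction.
  - intros x y Hx HD HU. destruct (c0_cases alpha x (y+1)) as [(?&?&?)|[(?&?&E)|(U&?&?)]].
    + lia.
    + rewrite E in HD; simpl in HD; contradiction.
    + rewrite U in HD; simpl in HD; contradiction.
  - intros a y H _. destruct (c0_cases alpha a y) as [(?&?&D)|[(?&?&E)|(U&?&?)]].
    + rewrite H in D; simpl in D; contradiction.
    + rewrite H in E; discriminate.
    + rewrite H in U; discriminate.
  - (* only row n carries sum bits west of column 0, and its column word is empty *)
    intros x y s Hx Hs. destruct (c0_cases alpha x y) as [(?&?&?)|[(?&Ey&E)|(U&?&?)]].
    + lia.
    + rewrite E in Hs; simpl in Hs; inversion Hs; subst.
      unfold column_word. rewrite Z.sub_diag. reflexivity.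
    + rewrite U in Hs; discriminate.
Qed.

Section Preservation.
Variable n : Z.
Variable C : config.
Hypothesis HC : Inv n C.

Lemma carry_west_defined_above x y : y < n -> C (x-1,y) = Half true ->
  is_defined (C (x,y+1)).
Proof.
  intros Hy W. pose proof (inv_half_west _ _ HC _ _ _ W) as Hx.
  pose proof (inv_northeast _ _ HC (x-1) y Hx Hy) as D.
  replace (x-1+1) with x in D by lia. apply D. rewrite W; discriminate.
Qed.

(* West of column 0 the non-local rule cannot create a cell: a carry
   (1,bot) at (x-1,y) with (x,y) undefined forces x-1 = -1. *)
Lemma no_creation_west x y : x < 0 -> C (x-1,y) = Half true -> C (x,y) = Und -> False.
Proof.
  intros Hx W U. assert (U' : C (x-1+1,y) = Und) by (replace (x-1+1) with x by lia; exact U).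
  pose proof (inv_carry_column _ _ HC _ _ W U'). lia.
Qed.

Lemma column_word_stable x y : x < 0 -> C (x,y) <> Und ->
  column_word (F C) (x+1) y n = column_word C (x+1) y n.
Proof.
  intros Hx HU. apply column_word_ext. intros y' Hy'.
  assert (D : is_defined (C (x+1,y'))).
  { apply (column_defined_upto C n (x+1) (y+1)); [exact (inv_up_defined _ _ HC)| |lia].
    apply (inv_northeast _ _ HC); auto; lia. }
  destruct (C (x+1,y')) eqn:E; simpl in D; try contradiction. apply F_keeps_def; auto.
Qed.

Lemma F_support x y : (1 <= x \/ n < y) -> F C (x,y) = Und.
Proof.
  intros Hxy. assert (HU := inv_support _ _ HC x y Hxy).
  destruct (F C (x,y)) eqn:EF; [reflexivity| |];
  (assert (FN : F C (x,y) <> Und) by (rewrite EF; discriminate));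
  destruct (F_new_cell C x y HU FN) as [[_ W]|(s1&s'&c'&Hc&_&_)].
  all: try (pose proof (inv_half_west _ _ HC _ _ _ W);
            rewrite (inv_support _ _ HC (x-1) y) in W; [discriminate|lia]).
  all: pose proof (inv_half_west _ _ HC _ _ _ Hc);
       rewrite (inv_support _ _ HC x (y+1)) in Hc; [discriminate|lia].
Qed.

Lemma F_half_west x y s : F C (x,y) = Half s -> x < 0.
Proof.
  intros HF. destruct (C (x,y)) eqn:E.
  - assert (FN : F C (x,y) <> Und) by (rewrite HF; discriminate).
    destruct (F_new_cell C x y E FN) as [[D _]|(s1&s'&c'&Hc&_&_)].
    + rewrite HF in D; discriminate.
    + exact (inv_half_west _ _ HC _ _ _ Hc).
  - exact (inv_half_west _ _ HC _ _ _ E).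
  - rewrite (F_keeps_def _ _ _ _ _ E) in HF; discriminate.
Qed.

Lemma F_northeast x y : x < 0 -> y < n -> F C (x,y) <> Und -> is_defined (F C (x+1,y+1)).
Proof.
  intros Hx Hy HF. destruct (C (x,y)) eqn:E.
  - destruct (F_new_cell C x y E HF) as [[_ W]|(s1&s'&c'&_&Hd&_)].
    + exfalso. exact (no_creation_west x y Hx W E).
    + rewrite (F_of_nonlocal_def _ _ _ _ _ Hd). exact I.
  - apply F_keeps_defined, (inv_northeast _ _ HC); auto. rewrite E; discriminate.
  - apply F_keeps_defined, (inv_northeast _ _ HC); auto. rewrite E; discriminate.
Qed.

Lemma F_up_not_und x y : y < n -> F C (x,y) <> Und -> F C (x,y+1) <> Und.
Proof.
  intros Hy HF. destruct (C (x,y)) eqn:E.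
  - destruct (F_new_cell C x y E HF) as [[_ W]|(s1&s'&c'&Hc&_&_)].
    + apply defined_not_und, F_keeps_defined, carry_west_defined_above; auto.
    + apply F_keeps_not_und. rewrite Hc; discriminate.
  - apply F_keeps_not_und, (inv_up_not_und _ _ HC); auto. rewrite E; discriminate.
  - apply F_keeps_not_und, (inv_up_not_und _ _ HC); auto. rewrite E; discriminate.
Qed.

Lemma F_up_defined x y : y < n -> is_defined (F C (x,y)) -> is_defined (F C (x,y+1)).
Proof.
  intros Hy HD. destruct (C (x,y)) eqn:E.
  - destruct (F_new_cell C x y E (defined_not_und _ HD)) as [[_ W]|(s1&s'&c'&_&_&He)].
    + apply F_keeps_defined, carry_west_defined_above; auto.
    + rewrite He in HD; simpl in HD; contradiction.
  - destruct (F_half_to_defined C x y b E HD) as [[_ _]|(_&_&W)].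
    + (* the north neighbour is present and its east neighbour is defined *)
      assert (NU : C (x,y) <> Und) by (rewrite E; discriminate).
      pose proof (inv_northeast _ _ HC x y (inv_half_west _ _ HC _ _ _ E) Hy NU) as D1.
      pose proof (inv_up_not_und _ _ HC x y Hy NU) as N3.
      destruct (C (x,y+1)) eqn:E2.
      * contradiction.
      * eapply F_half_with_defined_east; eauto.
      * apply F_keeps_defined. rewrite E2; exact I.
    + apply F_keeps_defined, carry_west_defined_above; auto.
  - apply F_keeps_defined, (inv_up_defined _ _ HC); auto. rewrite E; exact I.
Qed.

Lemma F_created x y : x < 0 -> is_defined (F C (x,y+1)) -> F C (x,y) = Und ->
  F C (x,y+1) = Def false true /\ sum_bit (F C (x-1,y+1)) = Some true.
Proof.
  intros Hx HD HFU. pose proof (F_und_inv _ _ _ HFU) as HU.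
  destruct (C (x,y+1)) eqn:E.
  - destruct (F_new_cell C x (y+1) E (defined_not_und _ HD))
      as [[D W]|(s1&s'&c'&_&_&He)].
    + split; auto. apply F_keeps_sum_bit. rewrite W; reflexivity.
    + rewrite He in HD; simpl in HD; contradiction.
  - destruct (F_half_to_defined C x (y+1) b E HD) as [[N1 N2]|(_&D&W)].
    + exfalso. exact (F_fills_below C x y b N1 N2 HFU).
    + split; auto. apply F_keeps_sum_bit. rewrite W; reflexivity.
  - assert (D0 : is_defined (C (x,y+1))) by (rewrite E; exact I).
    destruct (inv_created _ _ HC x y Hx D0 HU) as [E1 E2].
    split; [apply F_keeps_def | apply F_keeps_sum_bit]; auto.
Qed.

(* The bits s1, s', c' feeding a new (1,bot) cell at (a,y), a <> -1, with
   undefined east neighbour: both the invariant and the non-local rule force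
   (a,y+1) = (1,bot) and (a+1,y+1) = (0,1), whose sum is even. *)
Lemma new_carry_inputs a y s1 s' c' : a <> -1 -> C (a+1,y) = Und ->
  C (a,y+1) = Half s1 -> nonlocal C (a+1,y+1) = Def s' c' ->
  s1 = true /\ s' = false /\ c' = true.
Proof.
  intros Hne HU Hc Hd. pose proof (inv_half_west _ _ HC _ _ _ Hc) as Ha.
  destruct (nonlocal_def_inv C (a+1) (y+1) s' c' Hd) as [D1|(Es&Ec&W)].
  - assert (D0 : is_defined (C (a+1,y+1))) by (rewrite D1; exact I).
    destruct (inv_created _ _ HC (a+1) y ltac:(lia) D0 HU) as [E1 E2].
    replace (a+1-1) with a in E2 by lia. rewrite Hc in E2. simpl in E2.
    rewrite D1 in E1. inversion E1; inversion E2; auto.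
  - replace (a+1-1) with a in W by lia. rewrite Hc in W. inversion W; auto.
Qed.

Lemma F_carry_column a y : F C (a,y) = Half true -> F C (a+1,y) = Und -> a = -1.
Proof.
  intros HF HF2. pose proof (F_und_inv _ _ _ HF2) as HU1.
  destruct (C (a,y)) eqn:E.
  - assert (FN : F C (a,y) <> Und) by (rewrite HF; discriminate).
    destruct (F_new_cell C a y E FN) as [[D _]|(s1&s'&c'&Hc&Hd&He)].
    + rewrite HF in D; discriminate.
    + destruct (Z.eq_dec a (-1)) as [|Hne]; auto. exfalso.
      destruct (new_carry_inputs a y s1 s' c' Hne HU1 Hc Hd) as (->&->&->).
      rewrite HF in He. discriminate.
  - assert (Eb : sum_bit (F C (a,y)) = Some b)
      by (apply F_keeps_sum_bit; rewrite E; reflexivity).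
    rewrite HF in Eb; simpl in Eb; inversion Eb; subst.
    exact (inv_carry_column _ _ HC _ _ E HU1).
  - rewrite (F_keeps_def _ _ _ _ _ E) in HF; discriminate.
Qed.

Lemma F_parity x y s : x < 0 -> sum_bit (F C (x,y)) = Some s ->
  (b2n s mod 2 = val3' (column_word (F C) (x+1) y n) mod 2)%nat.
Proof.
  intros Hx Hs. destruct (und_dec (C (x,y))) as [E|NU].
  - (* a new cell: it is computed from (x,y+1) and (x+1,y+1) *)
    destruct (F_new_cell C x y E (sum_bit_not_und _ _ Hs))
      as [[_ W]|(s1&s'&c'&Hc&Hd&He)].
    + exfalso. exact (no_creation_west x y Hx W E).
    + rewrite He in Hs. simpl in Hs. inversion Hs; subst s.
      assert (Hy1 : y + 1 <= n).
      { destruct (Z_le_gt_dec (y+1) n); auto.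
        rewrite (inv_support _ _ HC x (y+1)) in Hc; [discriminate|lia]. }
      assert (NU1 : C (x,y+1) <> Und) by (rewrite Hc; discriminate).
      rewrite column_word_cons by lia.
      rewrite (F_of_nonlocal_def _ _ _ _ _ Hd), (column_word_stable x (y+1) Hx NU1).
      apply parity_new_half, (inv_parity _ _ HC x (y+1) s1 Hx).
      rewrite Hc; reflexivity.
  - (* an old cell: same sum bit, same column word *)
    destruct (not_und_sum_bit _ NU) as [b Hb].
    rewrite (F_keeps_sum_bit C x y b Hb) in Hs. inversion Hs; subst b.
    rewrite (column_word_stable x y Hx NU).
    exact (inv_parity _ _ HC x y s Hx Hb).
Qed.

End Preservation.

Lemma Inv_F n C : Inv n C -> Inv n (F C).
Proof.
  intros H. constructor.
  - exact (F_support n C H).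
  - exact (F_half_west n C H).
  - exact (F_northeast n C H).
  - exact (F_up_not_und n C H).
  - exact (F_up_defined n C H).
  - exact (F_created n C H).
  - exact (F_carry_column n C H).
  - exact (F_parity n C H).
Qed.

Lemma Inv_iter alpha k : Inv (Z.of_nat (length alpha)) (Fiter k (c0 alpha)).
Proof.
  induction k as [|k IH].
  - apply Inv_c0.
  - unfold Fiter in *. simpl. apply Inv_F; auto.
Qed.

Lemma Inv_column_parity n C x0 y0 s c : Inv n C ->
  is_defined (C (x0,y0+1)) -> C (x0-1,y0) = Def s c ->
  (forall y, y0 < y <= n -> is_defined (C (x0,y))) /\
  (b2n s mod 2 = val3' (column_word C x0 y0 n) mod 2)%nat.
Proof.
  intros HC HN HW. split.
  - intros y Hy. apply (column_defined_upto C n x0 (y0+1)); auto; [|lia].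
    exact (inv_up_defined _ _ HC).
  - assert (Hx0 : x0 - 1 < 0).
    { destruct (Z_lt_le_dec (x0-1) 0); auto.
      rewrite (inv_support _ _ HC x0 (y0+1)) in HN; [simpl in HN; contradiction|lia]. }
    pose proof (inv_parity _ _ HC (x0-1) y0 s Hx0 ltac:(rewrite HW; reflexivity)) as P.
    replace (x0-1+1) with x0 in P by lia. exact P.
Qed.

Lemma limit_on_list alpha cinf : is_limit alpha cinf -> forall l : list cell,
  exists T, forall m, (T <= m)%nat -> forall u, In u l -> Fiter m (c0 alpha) u = cinf u.
Proof.
  intros Hl l. induction l as [|u l [T HT]].
  - exists 0%nat. intros m _ u [].
  - destruct (Hl u) as [n0 Hn0]. exists (Nat.max n0 T).
    intros m Hm v [<-|Hv].
    + apply Hn0. lia.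
    + apply HT; auto. lia.
Qed.

Theorem mainTheorem5 (alpha : list trit) (cinf : config) (x0 y0 : Z) :
  is_limit alpha cinf ->
  is_defined (cinf (cadd (x0, y0) dirN)) ->
  is_defined (cinf (cadd (x0, y0) dirW)) ->
  forall s c : bool, cinf (cadd (x0, y0) dirW) = Def s c ->
  (forall y : Z, y0 < y <= Z.of_nat (length alpha) -> is_defined (cinf (x0, y))) /\
  ((b2n s) mod 2 = (val3' (column_word cinf x0 y0 (Z.of_nat (length alpha)))) mod 2)%nat.
Proof.
  intros Hl HN _ s c Hs. rewrite cadd_N in HN. rewrite cadd_W in Hs.
  set (n := Z.of_nat (length alpha)).
  (* a finite iterate agreeing with cinf on the north cell, the west cell and the column *)
  destruct (limit_on_list alpha cinf Hl ((x0,y0+1) :: (x0-1,y0) ::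
      map (fun k => (x0, y0 + 1 + Z.of_nat k)) (seq 0 (Z.to_nat (n - y0)))))
    as [T HT].
  set (C := Fiter T (c0 alpha)).
  assert (Ecol : forall y, y0 < y <= n -> C (x0,y) = cinf (x0,y)).
  { intros y Hy. apply HT; [lia|]. right; right. apply in_map_iff.
    exists (Z.to_nat (y - y0 - 1)). split; [f_equal; lia | apply in_seq; lia]. }
  destruct (Inv_column_parity n C x0 y0 s c (Inv_iter alpha T)) as [Hdef Hpar].
  - rewrite (HT T (le_n T)); [exact HN | left; reflexivity].
  - rewrite (HT T (le_n T)); [exact Hs | right; left; reflexivity].
  - split.
    + intros y Hy. rewrite <- Ecol; auto.
    + rewrite (column_word_ext C cinf x0 y0 n Ecol) in Hpar. exact Hpar.
Qed.
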